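(* Let $q$ be a non-negative integer and $\Lambda$ a unital commutative ring which is $q$-torsion-free. If $\mathfrak g$ is a perfect Lie algebra over $\Lambda$, i.e. $\mathfrak g=[\mathfrak g,\mathfrak g]$, then $Z^{\boxtimes}_q(\mathfrak g)=Z^{\curlywedge}_q(\mathfrak g)=Z(\mathfrak g)$.
   Context: All Lie algebras are over $\Lambda$; $Z(\mathfrak g)$ is the center and $[\mathfrak g,\mathfrak g]$ the $\Lambda$-span of all brackets. Non-abelian $q$-tensor square: for $q\ge1$, $\mathfrak g\otimes^q\mathfrak g$ is the Lie algebra generated by symbols $h\otimes g$ and $\{h\}$ ($h,g\in\mathfrak g$) subject to, for all $h,h',g,g'\in\mathfrak g$, $\lambda,\lambda'\in\Lambda$: (1) $\lambda(h\otimes g)=\lambda h\otimes g=h\otimes\lambda g$; (2) $(h+h')\otimes g=h\otimes g+h'\otimes g$; (3) $h\otimes(g+g')=h\otimes g+h\otimes g'$; (4) $[h,h']\otimes g=h\otimes[h',g]-h'\otimes[h,g]$; (5) $h\otimes[g,g']=[g',h]\otimes g-[g,h]\otimes g'$; (6) $[h\otimes g,h'\otimes g']=[h,g]\otimes[h',g']$; (7) $[\{h'\},h\otimes g]=[qh',h]\otimes g+h\otimes[qh',g]$; (8) $\{\lambda h+\lambda'h'\}=\lambda\{h\}+\lambda'\{h'\}$; (9) $[\{h\},\{h'\}]=qh\otimes qh'$; (10) $\{[h,g]\}=q(h\otimes g)$. For $q=0$, generated by the $h\otimes g$ subject to (1)–(6) only. The $q$-exterior square $\mathfrak g\wedge^q\mathfrak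 g$ is the quotient of $\mathfrak g\otimes^q\mathfrak g$ by the relations $h\otimes h=0$, images written $h\wedge g$. $Z^{\boxtimes}_q(\mathfrak g)=\{g\in\mathfrak g\mid g\otimes x=0\text{ in }\mathfrak g\otimes^q\mathfrak g\text{ for all }x\in\mathfrak g\}$ and $Z^{\curlywedge}_q(\mathfrak g)=\{g\in\mathfrak g\mid g\wedge x=0\text{ in }\mathfrak g\wedge^q\mathfrak g\text{ for all }x\in\mathfrak g\}$. *)

From mathcomp Require Import all_boot all_algebra.
Set Implicit Arguments. Unset Strict Implicit. Unset Printing Implicit Defensive.
Import GRing.Theory.
Local Open Scope ring_scope.

Record lie_algebra (R : comPzRingType) (V : lmodType R) := LieAlgebra {
  lbr : V -> V -> V;
  lbr_linl : forall (a : R) (x y z : V), lbr (a *: x + y) z = a *: lbr x z + lbr y z;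
  lbr_linr : forall (a : R) (x y z : V), lbr z (a *: x + y) = a *: lbr z x + lbr z y;
  lbr_alt : forall x : V, lbr x x = 0;
  lbr_jacobi : forall x y z : V,
      lbr x (lbr y z) + lbr y (lbr z x) + lbr z (lbr x y) = 0
}.

Definition q_torsion_free (R : comPzRingType) (q : nat) : Prop :=
  (0 < q)%N -> forall l : R, l *+ q = 0 -> l = 0.

Definition lie_center (R : comPzRingType) (V : lmodType R) (g : lie_algebra V)
  (x : V) : Prop := forall y : V, lbr g x y = 0.

Definition lie_perfect (R : comPzRingType) (V : lmodType R) (g : lie_algebra V)
  : Prop :=
  forall z : V, exists s : seq (R * V * V),
    z = \sum_(p <- s) p.1.1 *: lbr g p.1.2 p.2.

(* Relations (1)-(6) of the q-tensor square, interpreted in a Lie algebra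
   (L, bL) via t h g := image of h (x) g. *)
Definition tensor_rels_base (R : comPzRingType) (V : lmodType R)
  (g : lie_algebra V) (L : lmodType R) (bL : lie_algebra L)
  (t : V -> V -> L) : Prop :=
  [/\ (forall (l : R) h x, l *: t h x = t (l *: h) x /\ l *: t h x = t h (l *: x)),
      (forall h h' x, t (h + h') x = t h x + t h' x) /\
      (forall h x x', t h (x + x') = t h x + t h x'),
      (forall h h' x, t (lbr g h h') x = t h (lbr g h' x) - t h' (lbr g h x)),
      (forall h x x', t h (lbr g x x') = t (lbr g x' h) x - t (lbr g x h) x') &
      (forall h x h' x', lbr bL (t h x) (t h' x') = t (lbr g h x) (lbr g h' x'))].

(* Relations (7)-(10), with c h := image of {h}. *)
Definition tensor_rels_q (R : comPzRingType) (V : lmodType R) (q : nat)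
  (g : lie_algebra V) (L : lmodType R) (bL : lie_algebra L)
  (t : V -> V -> L) (c : V -> L) : Prop :=
  [/\ (forall h h' x,
         lbr bL (c h') (t h x) = t (lbr g (h' *+ q) h) x + t h (lbr g (h' *+ q) x)),
      (forall (l l' : R) h h', c (l *: h + l' *: h') = l *: c h + l' *: c h'),
      (forall h h', lbr bL (c h) (c h') = t (h *+ q) (h' *+ q)) &
      (forall h x, c (lbr g h x) = t h x *+ q)].

(* A "model" of the presentation of g (x)^q g in a Lie algebra L: an
   interpretation of the generators satisfying all defining relations
   ((1)-(6) for q = 0; (1)-(10) for q >= 1, the symbols {h} being
   absent when q = 0). *)
Definition qtensor_model (R : comPzRingType) (V : lmodType R) (q : nat)
  (g : lie_algebra V) (L : lmodType R) (bL : lie_algebra L)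
  (t : V -> V -> L) (c : V -> L) : Prop :=
  tensor_rels_base g bL t /\ ((0 < q)%N -> tensor_rels_q q g bL t c).

Definition qexterior_model (R : comPzRingType) (V : lmodType R) (q : nat)
  (g : lie_algebra V) (L : lmodType R) (bL : lie_algebra L)
  (t : V -> V -> L) (c : V -> L) : Prop :=
  qtensor_model q g bL t c /\ (forall h, t h h = 0).

(* An element of a Lie algebra given by generators and relations is zero
   iff its image vanishes in every Lie algebra interpretation of the
   presentation (universal property of the presented Lie algebra). *)
Definition Z_qtensor (R : comPzRingType) (V : lmodType R) (q : nat)
  (g : lie_algebra V) (x : V) : Prop :=
  forall (L : lmodType R) (bL : lie_algebra L) (t : V -> V -> L) (c : V -> L),
    qtensor_model q g bL t c -> forall y : V, t x y = 0.

Definition Z_qexterior (R : comPzRingType) (V : lmodType R) (q : nat)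
  (g : lie_algebra V) (x : V) : Prop :=
  forall (L : lmodType R) (bL : lie_algebra L) (t : V -> V -> L) (c : V -> L),
    qexterior_model q g bL t c -> forall y : V, t x y = 0.

From mathcomp Require Import all_boot all_algebra.
Import GRing.Theory.
Local Open Scope ring_scope.
Set Implicit Arguments.

(* g itself, with h (x) x := [h, x] and {h} := q h, satisfies every defining
   relation of g (x)^q g and g /\^q g (all of them reduce to the Jacobi
   identity), so an element whose tensors all vanish is central.  Conversely,
   relation (5) gives x (x) [y, y'] = [y', x] (x) y - [y, x] (x) y', which
   vanishes for central x; perfectness spreads this to all of g. *)

Section LieBracket.
Variables (R : comPzRingType) (V : lmodType R) (g : lie_algebra V).
Local Notation "[ x , y ]" := (lbr g x y).

Lemma lbrDl x y z : [x + y, z] = [x, z] + [y, z].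
Proof. by have := lbr_linl g 1 x y z; rewrite !scale1r. Qed.

Lemma lbrDr x y z : [z, x + y] = [z, x] + [z, y].
Proof. by have := lbr_linr g 1 x y z; rewrite !scale1r. Qed.

Lemma lbr0l z : [0, z] = 0.
Proof. by apply/(@addrI _ [0, z]); rewrite -lbrDl !addr0. Qed.

Lemma lbr0r z : [z, 0] = 0.
Proof. by apply/(@addrI _ [z, 0]); rewrite -lbrDr !addr0. Qed.

Lemma lbrZl a x z : [a *: x, z] = a *: [x, z].
Proof. by have := lbr_linl g a x 0 z; rewrite !addr0 lbr0l addr0. Qed.

Lemma lbrZr a x z : [z, a *: x] = a *: [z, x].
Proof. by have := lbr_linr g a x 0 z; rewrite !addr0 lbr0r addr0. Qed.

Lemma lbrNl x z : [- x, z] = - [x, z].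
Proof. by rewrite -scaleN1r lbrZl scaleN1r. Qed.

Lemma lbrNr x z : [z, - x] = - [z, x].
Proof. by rewrite -scaleN1r lbrZr scaleN1r. Qed.

Lemma lbr_anti x y : [x, y] = - [y, x].
Proof.
apply/eqP; rewrite -subr_eq0 opprK.
by have := lbr_alt g (x + y); rewrite lbrDl !lbrDr !lbr_alt add0r addr0 => ->.
Qed.

Lemma lbr_leibniz x y z : [x, [y, z]] = [[x, y], z] + [y, [x, z]].
Proof.
have J := lbr_jacobi g x y z.
rewrite (lbr_anti z x) lbrNr (lbr_anti z [x, y]) in J.
apply/eqP; rewrite -subr_eq0 opprD addrA; apply/eqP; rewrite -J.
by rewrite addrAC.
Qed.

End LieBracket.

Lemma lbr_qexterior_model (R : comPzRingType) (q : nat) (V : lmodType R)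
    (g : lie_algebra V) :
  qexterior_model q g g (lbr g) (fun h => h *+ q).
Proof.
split; last exact: lbr_alt.
split=> [|_].
  split.
  - by move=> l h x; rewrite lbrZl lbrZr.
  - by split=> *; rewrite ?lbrDl ?lbrDr.
  - by move=> h h' x; rewrite lbr_leibniz addrK.
  - move=> h x x'; rewrite lbr_leibniz (lbr_anti _ h x) lbrNl.
    by rewrite (lbr_anti _ x (lbr g h x')) (lbr_anti _ h x') lbrNl opprK addrC.
  - by [].
split.
- by move=> h h' x; rewrite lbr_leibniz.
- by move=> l l' h h'; rewrite mulrnDl !scalerMnr.
- by [].
- by [].
Qed.

Section QTensorCenters.
Variables (R : comPzRingType) (q : nat) (V : lmodType R) (g : lie_algebra V).

Lemma Z_qexterior_center x : Z_qexterior q g x -> lie_center g x.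
Proof. by move=> Zx; apply: Zx (lbr_qexterior_model q g). Qed.

Lemma Z_qtensor_qexterior x : Z_qtensor q g x -> Z_qexterior q g x.
Proof. by move=> Zx L bL t c [model _]; apply: Zx model. Qed.

Lemma tensor_rels_center_eq0 (L : lmodType R) (bL : lie_algebra L)
    (t : V -> V -> L) x :
  lie_perfect g -> tensor_rels_base g bL t -> lie_center g x ->
  forall y, t x y = 0.
Proof.
move=> perf [tZ [tDl tDr] _ tbrr _] cx y.
have t0l z : t 0 z = 0 by apply/(@addrI _ (t 0 z)); rewrite -tDl !addr0.
have t0r : t x 0 = 0 by apply/(@addrI _ (t x 0)); rewrite -tDr !addr0.
have [s ->] := perf y.
rewrite (big_morph (t x) (tDr x) t0r) big1 // => -[[a u] v] _ /=.
rewrite -(tZ a x _).2 tbrr (lbr_anti _ v) (lbr_anti _ u) !cx oppr0 !t0l.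
by rewrite subrr scaler0.
Qed.

Lemma center_Z_qtensor x :
  lie_perfect g -> lie_center g x -> Z_qtensor q g x.
Proof.
by move=> perf cx L bL t c [rels _]; apply: tensor_rels_center_eq0 perf rels cx.
Qed.

End QTensorCenters.

Theorem proposition6p9 (R : comPzRingType) (q : nat) (V : lmodType R)
  (g : lie_algebra V) :
  q_torsion_free R q -> lie_perfect g ->
  forall x : V,
    (Z_qtensor q g x <-> lie_center g x) /\
    (Z_qexterior q g x <-> lie_center g x).
Proof.
move=> _ perf x; split; split.
- by move/Z_qtensor_qexterior/Z_qexterior_center.
- exact: center_Z_qtensor.
- exact: Z_qexterior_center.
- by move/(center_Z_qtensor (q := q) perf)/Z_qtensor_qexterior.
Qed.
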